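(* Algorithm $\mathsf{AG}$ (described in the context) implements an asymmetric gather protocol, i.e., it satisfies the Common Core, Validity and Agreement properties defined in the context.
   Context: System model: a finite set $\mathcal{P}=\{p_1,\dots,p_n\}$ of processes communicating asynchronously over authenticated point-to-point links; every message sent from a correct process to a correct process is eventually delivered. A process that follows its protocol is correct; others (faulty, Byzantine) may behave arbitrarily. $F\subseteq\mathcal{P}$ denotes the (unknown) set of faulty processes of an execution. For $\mathcal{A}\subseteq 2^{\mathcal{P}}$, write $\mathcal{A}^*=\{A' : A'\subseteq A,\ A\in\mathcal{A}\}$. An asymmetric fail-prone system is an array $\mathbb{F}=[\mathcal{F}_1,\dots,\mathcal{F}_n]$ with $\mathcal{F}_i\subseteq 2^{\mathcal{P}}$. An asymmetric Byzantine quorum system for $\mathbb{F}$ is an array $\mathbb{Q}=[\mathcal{Q}_1,\dots,\mathcal{Q}_n]$ with $\mathcal{Q}_i\subseteq 2^{\mathcal{P}}$ (quorums for $p_i$) satisfying: (consistency) for all $i,j$, all $Q_i\in\mathcal{Q}_i$, $Q_j\in\mathcal{Q}_j$, $F_{ij}\in\mathcal{F}_i^*\cap\mathcal{F}_j^*$: $Q_i\cap Q_j\not\subseteq F_{ij}$; (availability) for all $i$ and $F_i\in\mathcal{F}_i$ there is $Q_i\in\mathcal{Q}_i$ with $F_i\cap Q_i=\emptyset$. A kernel for $p_i$ is a set $K\subseteq\mathcal{P}$ intersecting every $Q\in\mathcal{Q}_i$; $\mathcal{K}_i$ is the set of kernels for $p_i$. A correct process $p_i$ is wise if $F\in\mathcal{F}_i^*$.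 A guild is a set $\mathcal{G}$ of wise processes such that every $p_i\in\mathcal{G}$ has some $Q_i\in\mathcal{Q}_i$ with $Q_i\subseteq\mathcal{G}$. An execution with a guild is one in which a nonempty guild exists; the maximal guild $\mathcal{G}_{max}$ is the union of all guilds. Asymmetric reliable broadcast (arb-broadcast / arb-deliver) guarantees, in every execution with a guild: if a correct process arb-broadcasts $m$, every process of $\mathcal{G}_{max}$ eventually arb-delivers $m$; for each sender, all processes of $\mathcal{G}_{max}$ that arb-deliver from it deliver the same message; if some process of $\mathcal{G}_{max}$ arb-delivers a message from a sender, all processes of $\mathcal{G}_{max}$ eventually arb-deliver a message from that sender; a correct process arb-delivers at most one message per sender, and from a correct sender only a message it arb-broadcast. Algorithm $\mathsf{AG}$ (code of $p_i$; each correct process invokes ag-propose$(x_i)$ exactly once; each guarded ''upon there being ...'' action executes at most once, message handlers once per message). State: sets $S_i,T_i,U_i$ initially empty, boolean $sentT$ initially false. (1) Upon ag-propose$(x_i)$: arb-broadcast $(p_i,x_i)$. (2) Upon arb-delivering $(p_j,x_j)$ from $p_j$: $S_i\gets S_i\cup\{(p_j,x_j)\}$. (3) Upon there being $Q\in\mathcal{Q}_i$ such that for every $p_j\in Q$ some pair $(p_j,\cdot)\in S_i$: send $\langle\mathrm{DistributeS},p_i,S_i\rangle$ to all. (4) For a received $\langle\mathrm{DistributeS},p_j,S_j\rangle$: once $S_j\subseteq S_i$, provided $sentT$ is false at that moment, set $T_i\gets T_i\cup S_j$ and send $\langle\mathrm{Ack},p_i\rangle$ to $p_j$. (5) Upon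 Ack received from every member of some $Q\in\mathcal{Q}_i$: send Ready to all. (6) Upon Ready received from every member of some $Q\in\mathcal{Q}_i$: send Confirm to all. (7) Upon Confirm received from every member of some $K\in\mathcal{K}_i$: send Confirm to all. (8) Upon Confirm received from every member of some $Q\in\mathcal{Q}_i$: send $\langle\mathrm{DistributeT},p_i,T_i\rangle$ to all and set $sentT\gets$ true. (9) For a received $\langle\mathrm{DistributeT},p_j,T_j\rangle$ from $p_j$: once $T_j\subseteq S_i$, set $U_i\gets U_i\cup T_j$. (10) Upon DistributeT received from every member of some $Q\in\mathcal{Q}_i$: ag-deliver$(U_i)$. Asymmetric gather (interface ag-propose$(x)$ / ag-deliver$(U)$, where $U$ is a set of pairs $(p_j,x_j)$ meaning $p_j$ ag-proposed $x_j$) requires: (Common Core) in any execution with a guild, there exists a set $S^+$ composed of the values ag-proposed by the processes of some quorum $Q_i\in\mathcal{Q}_i$ of some process $p_i$ in the maximal guild, such that every process of the maximal guild that ag-delivers a set $U$ has $S^+\subseteq U$; (Validity) in any execution with a guild, if a process in the maximal guild includes $(p_j,x_j)$ in its ag-delivered set and $p_j$ is wise, then $p_j$ ag-proposed $x_j$; (Agreement) in any execution with a guild, for any two sets $U,U'$ ag-delivered by processes in the maximal guild, if $(p_j,x)\in U$ and $(p_j,x')\in U'$ then $x=x'$. *)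

From Stdlib Require List.
From mathcomp Require Import all_boot.
Set Implicit Arguments.
Unset Strict Implicit.
Unset Printing Implicit Defensive.

Section Trust.
Variable n : nat.
Local Notation P := 'I_n.

Definition star (A : {set {set P}}) : {set {set P}} :=
  [set B : {set P} | [exists A0 in A, B \subset A0]].

Definition asym_quorum_system (Fs Qs : P -> {set {set P}}) : Prop :=
  (forall (i j : P) (Qi Qj Fij : {set P}),
      Qi \in Qs i -> Qj \in Qs j -> Fij \in star (Fs i) -> Fij \in star (Fs j) ->
      ~~ (Qi :&: Qj \subset Fij))
  /\ (forall (i : P) (Fi : {set P}), Fi \in Fs i ->
      exists2 Qi, Qi \in Qs i & Fi :&: Qi = set0).

Definition kernel (Qs : P -> {set {set P}}) (i : P) (K : {set P}) : bool :=
  [forall Q in Qs i, K :&: Q != set0].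

Definition wise (Fs : P -> {set {set P}}) (F : {set P}) (i : P) : bool :=
  (i \notin F) && (F \in star (Fs i)).

Definition guild (Fs Qs : P -> {set {set P}}) (F : {set P}) (G : {set P}) : bool :=
  [forall i in G, wise Fs F i] && [forall i in G, [exists Q in Qs i, Q \subset G]].

Definition Gmax (Fs Qs : P -> {set {set P}}) (F : {set P}) : {set P} :=
  [set i | [exists G : {set P}, guild Fs Qs F G && (i \in G)]].

Definition with_guild (Fs Qs : P -> {set {set P}}) (F : {set P}) : Prop :=
  exists G : {set P}, guild Fs Qs F G && (G != set0).

End Trust.

Section Model.
Variable n : nat.
Local Notation P := 'I_n.
Variable V : eqType.

(* point-to-point messages of AG (the link sender is authenticated, so the
   redundant sender-identity fields of the paper are carried by the link) *)
Inductive msg :=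
| MDistS of seq (P * V)
| MAck
| MReady
| MConfirm
| MDistT of seq (P * V).

Record lstate := LState {
  proposed : bool;
  Sset : seq (P * V);
  Tset : seq (P * V);
  Uset : seq (P * V);
  sentT : bool;
  sentDS : bool;
  sentReady : bool;
  sentC6 : bool;
  sentC7 : bool;
  delivered : option (seq (P * V));
  rcvd : seq (P * msg);
  todoS : seq (P * seq (P * V));    (* received, not yet handled DistributeS *)
  todoT : seq (P * seq (P * V));    (* received, not yet handled DistributeT *)
  dtFrom : seq P                    (* senders of handled DistributeT *)
}.

Definition set_proposed l b := LState b (Sset l) (Tset l) (Uset l) (sentT l) (sentDS l)
  (sentReady l) (sentC6 l) (sentC7 l) (delivered l) (rcvd l) (todoS l) (todoT l) (dtFrom l).
Definition set_S l s := LState (proposed l) s (Tset l) (Uset l) (sentT l) (sentDS l)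
  (sentReady l) (sentC6 l) (sentC7 l) (delivered l) (rcvd l) (todoS l) (todoT l) (dtFrom l).
Definition set_T l s := LState (proposed l) (Sset l) s (Uset l) (sentT l) (sentDS l)
  (sentReady l) (sentC6 l) (sentC7 l) (delivered l) (rcvd l) (todoS l) (todoT l) (dtFrom l).
Definition set_U l s := LState (proposed l) (Sset l) (Tset l) s (sentT l) (sentDS l)
  (sentReady l) (sentC6 l) (sentC7 l) (delivered l) (rcvd l) (todoS l) (todoT l) (dtFrom l).
Definition set_sentT l b := LState (proposed l) (Sset l) (Tset l) (Uset l) b (sentDS l)
  (sentReady l) (sentC6 l) (sentC7 l) (delivered l) (rcvd l) (todoS l) (todoT l) (dtFrom l).
Definition set_sentDS l b := LState (proposed l) (Sset l) (Tset l) (Uset l) (sentT l) b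
  (sentReady l) (sentC6 l) (sentC7 l) (delivered l) (rcvd l) (todoS l) (todoT l) (dtFrom l).
Definition set_sentReady l b := LState (proposed l) (Sset l) (Tset l) (Uset l) (sentT l) (sentDS l)
  b (sentC6 l) (sentC7 l) (delivered l) (rcvd l) (todoS l) (todoT l) (dtFrom l).
Definition set_sentC6 l b := LState (proposed l) (Sset l) (Tset l) (Uset l) (sentT l) (sentDS l)
  (sentReady l) b (sentC7 l) (delivered l) (rcvd l) (todoS l) (todoT l) (dtFrom l).
Definition set_sentC7 l b := LState (proposed l) (Sset l) (Tset l) (Uset l) (sentT l) (sentDS l)
  (sentReady l) (sentC6 l) b (delivered l) (rcvd l) (todoS l) (todoT l) (dtFrom l).
Definition set_delivered l d := LState (proposed l) (Sset l) (Tset l) (Uset l) (sentT l) (sentDS l)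
  (sentReady l) (sentC6 l) (sentC7 l) d (rcvd l) (todoS l) (todoT l) (dtFrom l).
Definition set_rcvd l r := LState (proposed l) (Sset l) (Tset l) (Uset l) (sentT l) (sentDS l)
  (sentReady l) (sentC6 l) (sentC7 l) (delivered l) r (todoS l) (todoT l) (dtFrom l).
Definition set_todoS l s := LState (proposed l) (Sset l) (Tset l) (Uset l) (sentT l) (sentDS l)
  (sentReady l) (sentC6 l) (sentC7 l) (delivered l) (rcvd l) s (todoT l) (dtFrom l).
Definition set_todoT l s := LState (proposed l) (Sset l) (Tset l) (Uset l) (sentT l) (sentDS l)
  (sentReady l) (sentC6 l) (sentC7 l) (delivered l) (rcvd l) (todoS l) s (dtFrom l).
Definition set_dtFrom l s := LState (proposed l) (Sset l) (Tset l) (Uset l) (sentT l) (sentDS l)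
  (sentReady l) (sentC6 l) (sentC7 l) (delivered l) (rcvd l) (todoS l) (todoT l) s.

Definition linit : lstate :=
  LState false [::] [::] [::] false false false false false None [::] [::] [::] [::].

(* global state: local states and the multiset of in-transit messages
   (sender, receiver, message) *)
Record gstate := GState {
  loc : P -> lstate;
  net : seq (P * P * msg)
}.

Definition ginit : gstate := GState (fun _ => linit) [::].

Inductive action :=
| AProp of P                       (* (1) ag-propose(x_i), i.e. arb-broadcast (p_i, x_i) *)
| AArbDel of P & P & (P * V)       (* p_i arb-delivers m from p_j (then handler (2)) *)
| ADistS of P & {set P}            (* (3) with witness quorum *)
| AHandleS of P & P & seq (P * V)
| AReady of P & {set P}
| AConf6 of P & {set P}
| AConf7 of P & {set P}            (* (7) with witness kernel *)
| ADistT of P & {set P}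
| AHandleT of P & P & seq (P * V)
| ADeliver of P & {set P}
| ARecv of P & P & msg             (* link delivers to p_i a message from p_k *)
| AByz of P & P & msg              (* faulty p_k sends an arbitrary message to p_i *)
| AIdle.

Definition sendall (i : P) (m : msg) : seq (P * P * msg) :=
  [seq (i, k, m) | k <- enum P].

Definition upd (g : gstate) (i : P) (l : lstate) (out : seq (P * P * msg)) : gstate :=
  GState (fun k => if k == i then l else loc g k) (net g ++ out).

Definition on_receive (l : lstate) (k : P) (m : msg) : lstate :=
  let l' := set_rcvd l ((k, m) :: rcvd l) in
  match m with
  | MDistS s => set_todoS l' (rcons (todoS l) (k, s))
  | MDistT s => set_todoT l' (rcons (todoT l) (k, s))
  | _ => l'
  end.

Section Step.
Variables (Qs : P -> {set {set P}}) (F : {set P}).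

Inductive step (g : gstate) : action -> gstate -> Prop :=
| st_prop i : i \notin F -> ~~ proposed (loc g i) ->
    step g (AProp i) (upd g i (set_proposed (loc g i) true) [::])
| st_arbdel i j (m : P * V) : i \notin F ->
    step g (AArbDel i j m)
      (upd g i (if m.1 == j then set_S (loc g i) (rcons (Sset (loc g i)) m)
                else loc g i) [::])
| st_distS i Q : i \notin F -> Q \in Qs i ->
    (forall j, j \in Q -> has (fun p : P * V => p.1 == j) (Sset (loc g i))) ->
    ~~ sentDS (loc g i) ->
    step g (ADistS i Q)
      (upd g i (set_sentDS (loc g i) true) (sendall i (MDistS (Sset (loc g i)))))
| st_handleS i k s s1 s2 : i \notin F ->
    todoS (loc g i) = s1 ++ (k, s) :: s2 ->
    all (fun p => p \in Sset (loc g i)) s ->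
    step g (AHandleS i k s)
      (if sentT (loc g i)
       then upd g i (set_todoS (loc g i) (s1 ++ s2)) [::]
       else upd g i (set_T (set_todoS (loc g i) (s1 ++ s2)) (Tset (loc g i) ++ s))
                [:: (i, k, MAck)])
| st_ready i Q : i \notin F -> Q \in Qs i ->
    (forall k, k \in Q -> List.In (k, MAck) (rcvd (loc g i))) ->
    ~~ sentReady (loc g i) ->
    step g (AReady i Q) (upd g i (set_sentReady (loc g i) true) (sendall i MReady))
| st_conf6 i Q : i \notin F -> Q \in Qs i ->
    (forall k, k \in Q -> List.In (k, MReady) (rcvd (loc g i))) ->
    ~~ sentC6 (loc g i) ->
    step g (AConf6 i Q) (upd g i (set_sentC6 (loc g i) true) (sendall i MConfirm))
| st_conf7 i K : i \notin F -> kernel Qs i K ->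
    (forall k, k \in K -> List.In (k, MConfirm) (rcvd (loc g i))) ->
    ~~ sentC7 (loc g i) ->
    step g (AConf7 i K) (upd g i (set_sentC7 (loc g i) true) (sendall i MConfirm))
| st_distT i Q : i \notin F -> Q \in Qs i ->
    (forall k, k \in Q -> List.In (k, MConfirm) (rcvd (loc g i))) ->
    ~~ sentT (loc g i) ->
    step g (ADistT i Q)
      (upd g i (set_sentT (loc g i) true) (sendall i (MDistT (Tset (loc g i)))))
| st_handleT i k t t1 t2 : i \notin F ->
    todoT (loc g i) = t1 ++ (k, t) :: t2 ->
    all (fun p => p \in Sset (loc g i)) t ->
    step g (AHandleT i k t)
      (upd g i (set_dtFrom (set_U (set_todoT (loc g i) (t1 ++ t2)) (Uset (loc g i) ++ t))
                           (k :: dtFrom (loc g i))) [::])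
| st_deliver i Q : i \notin F -> Q \in Qs i ->
    (forall k, k \in Q -> k \in dtFrom (loc g i)) ->
    delivered (loc g i) = None ->
    step g (ADeliver i Q) (upd g i (set_delivered (loc g i) (Some (Uset (loc g i)))) [::])
| st_recv i k m n1 n2 : i \notin F ->
    net g = n1 ++ (k, i, m) :: n2 ->
    step g (ARecv i k m)
      (GState (fun j => if j == i then on_receive (loc g i) k m else loc g j) (n1 ++ n2))
| st_byz k i m : k \in F ->
    step g (AByz k i m) (GState (loc g) (net g ++ [:: (k, i, m)]))
| st_idle : step g AIdle g.

End Step.

Definition is_exec (Qs : P -> {set {set P}}) (F : {set P})
    (ex : nat -> gstate) (lab : nat -> action) : Prop :=
  ex 0 = ginit /\ forall t, step Qs F (ex t) (lab t) (ex t.+1).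

(* p_j ag-proposed v (the input of correct p_j is x j) *)
Definition ag_proposed (x : P -> V) (lab : nat -> action) (j : P) (v : V) : Prop :=
  exists t, lab t = AProp j /\ v = x j.

(* arb-broadcast of m by p_j happens exactly at the ag-propose step (1) *)
Definition arb_broadcast (x : P -> V) (lab : nat -> action) (j : P) (m : P * V) : Prop :=
  exists t, lab t = AProp j /\ m = (j, x j).

(* Specification of asymmetric reliable broadcast (the environment oracle) *)
Definition arb_spec (Fs Qs : P -> {set {set P}}) (F : {set P}) (x : P -> V)
    (lab : nat -> action) : Prop :=
  let G := Gmax Fs Qs F in
  (forall j m, j \notin F -> arb_broadcast x lab j m ->
     forall i, i \in G -> exists t, lab t = AArbDel i j m)
  /\ (forall i i' j m m' t t', i \in G -> i' \in G ->
        lab t = AArbDel i j m -> lab t' = AArbDel i' j m' -> m = m')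
  /\ (forall i j m t, i \in G -> lab t = AArbDel i j m ->
        forall i', i' \in G -> exists t' m', lab t' = AArbDel i' j m')
  /\ (forall i j m m' t t', i \notin F ->
        lab t = AArbDel i j m -> lab t' = AArbDel i j m' -> t = t')
  /\ (forall i j m t, i \notin F -> j \notin F -> lab t = AArbDel i j m ->
        exists2 t', t' < t & lab t' = AProp j /\ m = (j, x j)).

Definition reliable_links (F : {set P}) (ex : nat -> gstate) (lab : nat -> action) : Prop :=
  forall t k i m, k \notin F -> i \notin F -> List.In (k, i, m) (net (ex t)) ->
    exists2 t', t <= t' & lab t' = ARecv i k m.

(* each correct process invokes ag-propose (exactly once: enforced by step (1)) *)
Definition all_propose (F : {set P}) (lab : nat -> action) : Prop :=
  forall i, i \notin F -> exists t, lab t = AProp i.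

Definition ag_delivers (ex : nat -> gstate) (i : P) (U : seq (P * V)) : Prop :=
  exists t, delivered (loc (ex t) i) = Some U.

Definition common_core (Fs Qs : P -> {set {set P}}) (F : {set P}) (x : P -> V)
    (ex : nat -> gstate) (lab : nat -> action) : Prop :=
  exists (i0 : P) (Q : {set P}) (f : P -> V),
    [/\ i0 \in Gmax Fs Qs F, Q \in Qs i0,
        (* S+ = {(p_j, f j) | p_j \in Q} consists of the ag-proposed values *)
        (forall j, j \in Q -> j \notin F -> ag_proposed x lab j (f j)) &
        (forall i U, i \in Gmax Fs Qs F -> ag_delivers ex i U ->
           forall j, j \in Q -> (j, f j) \in U)].

Definition ag_validity (Fs Qs : P -> {set {set P}}) (F : {set P}) (x : P -> V)
    (ex : nat -> gstate) (lab : nat -> action) : Prop :=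
  forall i U j v, i \in Gmax Fs Qs F -> ag_delivers ex i U -> (j, v) \in U ->
    wise Fs F j -> ag_proposed x lab j v.

Definition ag_agreement (Fs Qs : P -> {set {set P}}) (F : {set P})
    (ex : nat -> gstate) : Prop :=
  forall i i' U U' j v v', i \in Gmax Fs Qs F -> i' \in Gmax Fs Qs F ->
    ag_delivers ex i U -> ag_delivers ex i' U' -> (j, v) \in U -> (j, v') \in U' ->
    v = v'.

End Model.

(* Every pair in a set U delivered by a guild member was put in its S by an
   arb-delivery, since U only collects sets T_k checked against S.  Validity
   and Agreement are therefore integrity and consistency of reliable broadcast.

   For Common Core, follow the messages backwards from a delivery by a guild
   member: its DistributeT quorum, the Confirm quorum of such a sender, and
   (through kernels) the chain of Confirms all contain guild members, so some
   guild member r sent Ready.  The Ack quorum of r and the DistributeT quorum of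
   any delivering guild member share a correct process k.  Process k
   acknowledged S_r before it stopped acknowledging and sent T_k, so
   S_r is contained in T_k and hence in the delivered set.  As S_r covers a
   quorum of r and r sends DistributeS once, S_r is the common core.  If no
   guild member ever delivers, any quorum of a guild member will do. *)

From Stdlib Require Import Classical.
From mathcomp Require Import all_boot.
Set Implicit Arguments.
Unset Strict Implicit.
Unset Printing Implicit Defensive.

Lemma exists_ltnS (P : nat -> Prop) t :
  (exists2 t0, t0 < t & P t0) -> exists2 t0, t0 < t.+1 & P t0.
Proof. by case=> t0 lt0 Pt0; exists t0 => //; apply: ltnW. Qed.

Lemma homo_leq_subset (T : eqType) (s : nat -> seq T) :
  (forall t, {subset s t <= s t.+1}) -> forall t t', t <= t' -> {subset s t <= s t'}.
Proof. by move=> sS; apply: homo_leq => [s1 y|s2 s1 s3 s12 s23 y /s12/s23|]. Qed.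

Lemma homo_leq_imply (b : nat -> bool) :
  (forall t, b t -> b t.+1) -> forall t t', t <= t' -> b t -> b t'.
Proof.
by move=> bS; apply: (@homo_leq _ b (fun b1 b2 : bool => b1 -> b2)) => [b1|b2 b1 b3 b12 b23 /b12/b23|].
Qed.

Definition assoc_val (K : eqType) (W : Type) (d : K -> W) (s : seq (K * W)) (k : K) : W :=
  (nth (k, d k) s (find (fun p => p.1 == k) s)).2.

Lemma mem_assoc_val (K W : eqType) (d : K -> W) (s : seq (K * W)) (k : K) :
  has (fun p => p.1 == k) s -> (k, assoc_val d s k) \in s.
Proof.
move=> hask; have := nth_find (k, d k) hask; rewrite has_find in hask.
by have := mem_nth (k, d k) hask; rewrite /assoc_val; case: nth => k' w /= ? /eqP <-.
Qed.

Section GuildQuorums.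
Variables (n : nat) (Fs Qs : 'I_n -> {set {set 'I_n}}) (F : {set 'I_n}).
Local Notation GM := (Gmax Fs Qs F).

Lemma guild_sub_Gmax G : guild Fs Qs F G -> G \subset GM.
Proof. by move=> gG; apply/subsetP => i iG; rewrite inE; apply/existsP; exists G; rewrite gG. Qed.

Lemma Gmax_nonempty : with_guild Fs Qs F -> exists i, i \in GM.
Proof. by case=> G /andP [/guild_sub_Gmax/subsetP GM_G /set0Pn [i /GM_G]]; exists i. Qed.

Lemma Gmax_wise i : i \in GM -> wise Fs F i.
Proof. by rewrite inE => /existsP [G /andP [/andP [/forall_inP wG _] /wG]]. Qed.

Lemma Gmax_correct i : i \in GM -> i \notin F.
Proof. by case/Gmax_wise/andP. Qed.

Lemma Gmax_quorum i : i \in GM -> exists2 Q, Q \in Qs i & Q \subset GM.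
Proof.
rewrite inE => /existsP [G /andP [gG iG]]; case/andP: (gG) => _ /forall_inP/(_ i iG).
case/exists_inP => Q QQ QG; exists Q => //.
exact: subset_trans QG (guild_sub_Gmax gG).
Qed.

Lemma kernel_meets_Gmax i K : i \in GM -> kernel Qs i K -> exists2 k, k \in K & k \in GM.
Proof.
case/Gmax_quorum => Q QQ /subsetP QG /forall_inP/(_ Q QQ)/set0Pn [k].
by rewrite inE => /andP [kK /QG]; exists k.
Qed.

Hypothesis quorum_system : asym_quorum_system Fs Qs.

Lemma quorums_meet_correct i j Qi Qj : i \in GM -> j \in GM -> Qi \in Qs i -> Qj \in Qs j ->
  exists k, [/\ k \in Qi, k \in Qj & k \notin F].
Proof.
move=> /Gmax_wise/andP [_ Fi] /Gmax_wise/andP [_ Fj] QQi QQj.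
have /subsetPn [k] := quorum_system.1 i j Qi Qj F QQi QQj Fi Fj.
by rewrite inE => /andP [kQi kQj] kF; exists k.
Qed.

Lemma quorum_meets_Gmax i Q : i \in GM -> Q \in Qs i -> exists2 k, k \in Q & k \in GM.
Proof.
move=> iG QQ; have [Q' QQ' /subsetP Q'G] := Gmax_quorum iG.
by have [k [kQ /Q'G kG _]] := quorums_meet_correct iG iG QQ QQ'; exists k.
Qed.

End GuildQuorums.

Section Execution.
Variables (n : nat) (V : eqType) (Fs Qs : 'I_n -> {set {set 'I_n}}) (F : {set 'I_n}).
Variables (x : 'I_n -> V) (ex : nat -> gstate n V) (lab : nat -> action n V).
Hypothesis ex0 : ex 0 = ginit n V.
Hypothesis ex_step : forall t, step Qs F (ex t) (lab t) (ex t.+1).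

Local Notation ls t i := (loc (ex t) i).
Local Notation GM := (Gmax Fs Qs F).

(* Inverts the transition taken at time [t] and splits the conditionals in its
   effect; [case_step_at t i] also splits on whether it is a step of [i]. *)
Ltac case_step t :=
  let Hs := fresh "Hs" in pose proof (ex_step t) as Hs;
  let g' := fresh "g'" in let Eg' := fresh "Eg'" in remember (ex t.+1) as g' eqn:Eg';
  let a := fresh "a" in let Ea := fresh "Ea" in remember (lab t) as a eqn:Ea;
  destruct Hs;
  try match goal with |- context [if sentT ?l then _ else _] =>
    let E := fresh "Est" in case E: (sentT l) end;
  try match goal with |- context [if ?b then set_S _ _ else _] =>
    let E := fresh "Earb" in case E: b end;
  try match goal with |- context [on_receive _ _ ?m] => rewrite /on_receive; destruct m end;
  rewrite /upd /=.

Ltac case_step_at t i := case_step t; try (case: (eqVneq i _) => [?|?]; [subst|]); simpl.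

Lemma Sset_arb_delivered i j v t : (j, v) \in Sset (ls t i) ->
  exists2 t0, t0 < t & lab t0 = AArbDel i j (j, v).
Proof.
elim: t => [|t IH]; first by rewrite ex0.
case_step_at t i; try by move/IH/exists_ltnS.
rewrite mem_rcons inE => /orP [/eqP Em|/IH/exists_ltnS//].
by exists t => //; rewrite -Ea; subst m; move/eqP: Earb => /= ->.
Qed.

Lemma Tset_mono i t t' : t <= t' -> {subset Tset (ls t i) <= Tset (ls t' i)}.
Proof.
apply: (@homo_leq_subset _ (fun t => Tset (ls t i))) => {}t.
by case_step_at t i => // y Hy; rewrite mem_cat Hy.
Qed.

Lemma Uset_mono i t t' : t <= t' -> {subset Uset (ls t i) <= Uset (ls t' i)}.
Proof.
apply: (@homo_leq_subset _ (fun t => Uset (ls t i))) => {}t.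
by case_step_at t i => // y Hy; rewrite mem_cat Hy.
Qed.

Lemma sentT_mono i t t' : t <= t' -> sentT (ls t i) -> sentT (ls t' i).
Proof. by apply: (@homo_leq_imply (fun t => sentT (ls t i))) => {}t; case_step_at t i. Qed.

Lemma sentDS_mono i t t' : t <= t' -> sentDS (ls t i) -> sentDS (ls t' i).
Proof. by apply: (@homo_leq_imply (fun t => sentDS (ls t i))) => {}t; case_step_at t i. Qed.

Lemma rcvd_grows i t p : List.In p (rcvd (ls t i)) -> List.In p (rcvd (ls t.+1 i)).
Proof. by case_step_at t i => //; right. Qed.

Lemma Uset_sub_Sset i t : {subset Uset (ls t i) <= Sset (ls t i)}.
Proof.
elim: t => [|t IH]; first by rewrite ex0.
case_step_at t i => // y; rewrite ?mem_cat ?mem_rcons ?inE.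
- by move/IH ->; rewrite orbT.
- by case/orP => [/IH //|]; move/allP: H1; apply.
Qed.

Lemma todoS_rcvd i k s t : (k, s) \in todoS (ls t i) -> List.In (k, MDistS s) (rcvd (ls t i)).
Proof.
elim: t => [|t IH]; first by rewrite ex0.
case_step_at t i; try exact: IH; try by move/IH; right.
all: try by move=> Hks; apply: IH; rewrite H0; apply: mem_subseq Hks; apply: cat_subseq (subseq_cons _ _).
by rewrite mem_rcons inE => /orP [/eqP [-> ->]|/IH]; [left | right].
Qed.

Lemma todoT_rcvd i k u t : (k, u) \in todoT (ls t i) -> List.In (k, MDistT u) (rcvd (ls t i)).
Proof.
elim: t => [|t IH]; first by rewrite ex0.
case_step_at t i; try exact: IH; try by move/IH; right.
all: try by move=> Hku; apply: IH; rewrite H0; apply: mem_subseq Hku; apply: cat_subseq (subseq_cons _ _).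
by rewrite mem_rcons inE => /orP [/eqP [-> ->]|/IH]; [left | right].
Qed.

Lemma rcvd_in_transit i k m t : List.In (k, m) (rcvd (ls t i)) ->
  exists2 t0, t0 < t & List.In (k, i, m) (net (ex t0)).
Proof.
elim: t => [|t IH]; first by rewrite ex0.
case_step_at t i; try by move/IH/exists_ltnS.
all: case=> [[<- <-]|/IH/exists_ltnS//]; exists t; rewrite // H0 List.in_app_iff; by right; left.
Qed.

Definition confirms_at t k :=
  (exists Q, lab t = AConf6 V k Q) \/ (exists K, lab t = AConf7 V k K).

Definition sends_at t k (i : 'I_n) (m : msg n V) : Prop :=
  match m with
  | MDistS s => exists Q, lab t = ADistS V k Q /\ s = Sset (ls t k)
  | MAck => exists s, lab t = AHandleS k i s /\ sentT (ls t k) = false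
  | MReady => exists A, lab t = AReady V k A
  | MConfirm => confirms_at t k
  | MDistT u => exists Q, lab t = ADistT V k Q /\ u = Tset (ls t k)
  end.

Lemma in_transit_sent k i m t : k \notin F -> List.In (k, i, m) (net (ex t)) ->
  exists2 t0, t0 < t & sends_at t0 k i m.
Proof.
move=> kF; elim: t => [|t IH]; first by rewrite ex0.
case_step t; rewrite ?List.in_app_iff; try by move/IH/exists_ltnS.
all: try (case=> [/IH/exists_ltnS //|]); try by case.
all: try by move=> Hin; apply/exists_ltnS/IH; rewrite H0 List.in_app_iff /=; tauto.
all: try by case/List.in_map_iff=> k' [[<- _ <-] _]; exists t => //=; rewrite ?/confirms_at -Ea; eauto.
- by case=> [[<- <- <-]|//]; exists t => //; exists s; rewrite -Ea Est.
- by case=> [[Ek _ _]|//]; move: kF; rewrite -Ek H.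
Qed.

Lemma rcvd_sent i k m t : k \notin F -> List.In (k, m) (rcvd (ls t i)) ->
  exists2 t0, t0 < t & sends_at t0 k i m.
Proof.
move=> kF /rcvd_in_transit [t1 lt1 /(in_transit_sent kF) [t0 lt0 sent]].
by exists t0 => //; apply: ltn_trans lt1.
Qed.

Lemma delivered_quorum i U t : delivered (ls t i) = Some U ->
  exists t1 Q, [/\ Q \in Qs i, {subset Q <= dtFrom (ls t1 i)} & U = Uset (ls t1 i)].
Proof.
elim: t => [|t IH]; first by rewrite ex0.
by case_step_at t i => //; case=> <-; exists t, Q.
Qed.

Lemma dtFrom_rcvd i k t : k \in dtFrom (ls t i) ->
  exists2 u, {subset u <= Uset (ls t i)} & List.In (k, MDistT u) (rcvd (ls t i)).
Proof.
elim: t => [|t IH]; first by rewrite ex0.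
have grown u : {subset u <= Uset (ls t i)} -> List.In (k, MDistT u) (rcvd (ls t i)) ->
    exists2 u, {subset u <= Uset (ls t.+1 i)} & List.In (k, MDistT u) (rcvd (ls t.+1 i)).
  by move=> uU ku; exists u; [move=> y /uU/(Uset_mono (leqnSn t)) | apply: rcvd_grows].
case: (boolP (k \in dtFrom (ls t i))) => [/IH [u uU ku] _ | knew]; first exact: grown uU ku.
case_step_at t i; rewrite ?(negbTE knew) // inE (negbTE knew) orbF => /eqP ->.
exists t0 => [y yt|]; first by rewrite mem_cat yt orbT.
by apply: todoT_rcvd; rewrite H0 mem_cat inE eqxx orbT.
Qed.

Lemma delivered_arb_delivered i U t j v : delivered (ls t i) = Some U -> (j, v) \in U ->
  exists t0, lab t0 = AArbDel i j (j, v).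
Proof.
case/delivered_quorum => t1 [Q [_ _ ->]] /Uset_sub_Sset/Sset_arb_delivered [t0 _ arb].
by exists t0.
Qed.

Lemma DistS_step t i Q : lab t = ADistS V i Q ->
  [/\ Q \in Qs i, (forall j, j \in Q -> has (fun p => p.1 == j) (Sset (ls t i))),
      sentDS (ls t i) = false & sentDS (ls t.+1 i)].
Proof.
by move=> lab_t; case_step t; try discriminate lab_t; case: lab_t => <- <-; rewrite eqxx; split=> //; apply: negbTE.
Qed.

Lemma Ready_step t i A : lab t = AReady V i A ->
  A \in Qs i /\ (forall k, k \in A -> List.In (k, MAck n V) (rcvd (ls t i))).
Proof. by move=> lab_t; case_step t; try discriminate lab_t; case: lab_t => <- <-. Qed.

Lemma Confirm6_step t i Q : lab t = AConf6 V i Q ->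
  Q \in Qs i /\ (forall k, k \in Q -> List.In (k, MReady n V) (rcvd (ls t i))).
Proof. by move=> lab_t; case_step t; try discriminate lab_t; case: lab_t => <- <-. Qed.

Lemma Confirm7_step t i K : lab t = AConf7 V i K ->
  kernel Qs i K /\ (forall k, k \in K -> List.In (k, MConfirm n V) (rcvd (ls t i))).
Proof. by move=> lab_t; case_step t; try discriminate lab_t; case: lab_t => <- <-. Qed.

Lemma DistT_step t i Q : lab t = ADistT V i Q ->
  [/\ Q \in Qs i, (forall k, k \in Q -> List.In (k, MConfirm n V) (rcvd (ls t i))),
      sentT (ls t i) = false & sentT (ls t.+1 i)].
Proof.
by move=> lab_t; case_step t; try discriminate lab_t; case: lab_t => <- <-; rewrite eqxx; split=> //; apply: negbTE.
Qed.

Lemma HandleS_step t i k s : lab t = AHandleS i k s -> sentT (ls t i) = false ->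
  List.In (k, MDistS s) (rcvd (ls t i)) /\ {subset s <= Tset (ls t.+1 i)}.
Proof.
move=> lab_t; case_step t; try discriminate lab_t; case: lab_t => <- <- <-; rewrite ?Est // => _.
split; first by apply: todoS_rcvd; rewrite H0 mem_cat inE eqxx orbT.
by rewrite eqxx /= => y ys; rewrite mem_cat ys orbT.
Qed.

Lemma DistS_unique t1 t2 i Q1 Q2 : lab t1 = ADistS V i Q1 -> lab t2 = ADistS V i Q2 -> t1 = t2.
Proof.
wlog lt12 : t1 t2 Q1 Q2 / t1 < t2.
  move=> W l1 l2; case: (ltngtP t1 t2) => [lt12|lt21|//].
  - exact: W l1 l2.
  - exact/esym/(W _ _ _ _ lt21 l2 l1).
case/DistS_step => _ _ _ sent1 /DistS_step [_ _ unsent2 _].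
by move: (sentDS_mono lt12 sent1); rewrite unsent2.
Qed.

Lemma acked_sub_DistT k r s ta td Q : lab ta = AHandleS k r s -> sentT (ls ta k) = false ->
  lab td = ADistT V k Q -> {subset s <= Tset (ls td k)}.
Proof.
move=> la unsent ld; have [_ sT] := HandleS_step la unsent.
have [_ _ _ sent] := DistT_step ld.
have lt_ad : ta < td.
  case: (ltngtP ta td) => [//|lt_da|E]; last by move: la; rewrite E ld.
  by move: (sentT_mono lt_da sent); rewrite unsent.
by move=> y /sT; apply: Tset_mono.
Qed.

Hypothesis quorum_system : asym_quorum_system Fs Qs.

Lemma Ready_of_confirm t c : c \in GM -> confirms_at t c ->
  exists r A tr, r \in GM /\ lab tr = AReady V r A.
Proof.
elim/ltn_ind: t c => t IH c cG [[Q lQ]|[K lK]].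
- have [QQ ready] := Confirm6_step lQ.
  have [k kQ kG] := quorum_meets_Gmax quorum_system cG QQ.
  have [tr _ [A lA]] := rcvd_sent (Gmax_correct kG) (ready k kQ).
  by exists k, A, tr.
- have [KK confirm] := Confirm7_step lK.
  have [k kK kG] := kernel_meets_Gmax cG KK.
  have [t0 lt0 sent] := rcvd_sent (Gmax_correct kG) (confirm k kK).
  exact: IH t0 lt0 k kG sent.
Qed.

Lemma Ready_of_delivery i U t : i \in GM -> delivered (ls t i) = Some U ->
  exists r A tr, r \in GM /\ lab tr = AReady V r A.
Proof.
move=> iG /delivered_quorum [t1 [Q [QQ dtQ _]]].
have [k kQ kG] := quorum_meets_Gmax quorum_system iG QQ.
have [u _ /(rcvd_sent (Gmax_correct kG)) [td _ [Qk [ld _]]]] := dtFrom_rcvd (dtQ k kQ).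
have [QQk confirm _ _] := DistT_step ld.
have [c cQk cG] := quorum_meets_Gmax quorum_system kG QQk.
have [tc _ sent] := rcvd_sent (Gmax_correct cG) (confirm c cQk).
exact: Ready_of_confirm sent.
Qed.

Lemma DistS_sub_delivered i U t r A tr : i \in GM -> r \in GM ->
  lab tr = AReady V r A -> delivered (ls t i) = Some U ->
  exists tD QD, lab tD = ADistS V r QD /\ {subset Sset (ls tD r) <= U}.
Proof.
move=> iG rG lr /delivered_quorum [t1 [Qi [QQi dtQi ->]]].
have [AA ack] := Ready_step lr.
have [k [kQi kA kF]] := quorums_meet_correct quorum_system iG rG QQi AA.
have [u uU /(rcvd_sent kF) [td _ [Qk [ld Eu]]]] := dtFrom_rcvd (dtQi k kQi).
have [ta _ [s [la unsent]]] := rcvd_sent kF (ack k kA).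
have [/(rcvd_sent (Gmax_correct rG)) [tD _ [QD [lD Es]]] _] := HandleS_step la unsent.
exists tD, QD; split=> // y; rewrite -Es => ys; apply: uU.
by rewrite Eu (acked_sub_DistT la unsent ld ys).
Qed.

Hypothesis arb : arb_spec Fs Qs F x lab.

Lemma arb_delivered_proposed i j v t : i \in GM -> j \notin F ->
  lab t = AArbDel i j (j, v) -> ag_proposed x lab j v.
Proof.
case: arb => _ [_ [_ [_ integrity]]] iG jF /(integrity _ _ _ _ (Gmax_correct iG) jF).
by case=> t' _ [lp [->]]; exists t'.
Qed.

Lemma ag_validity_holds : ag_validity Fs Qs F x ex lab.
Proof.
move=> i U j v iG [t del] jv /andP [jF _].
have [t0 arb0] := delivered_arb_delivered del jv.
exact: arb_delivered_proposed iG jF arb0.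
Qed.

Lemma ag_agreement_holds : ag_agreement Fs Qs F ex.
Proof.
case: arb => _ [consistency _] i i' U U' j v v' iG i'G [t del] [t' del'] jv jv'.
have [t0 arb0] := delivered_arb_delivered del jv.
have [t1 arb1] := delivered_arb_delivered del' jv'.
by case: (consistency _ _ _ _ _ _ _ iG i'G arb0 arb1).
Qed.

Lemma common_core_of_delivery i U t : i \in GM -> delivered (ls t i) = Some U ->
  common_core Fs Qs F x ex lab.
Proof.
move=> iG del; have [r [A [tr [rG lr]]]] := Ready_of_delivery iG del.
have [tD [QD [lD _]]] := DistS_sub_delivered iG rG lr del.
have [QQD covered _ _] := DistS_step lD.
pose S := Sset (ls tD r).
have mem_S j : j \in QD -> (j, assoc_val x S j) \in S by move/covered/mem_assoc_val.
exists r, QD, (assoc_val x S); split=> // [j jQD jF | i' U' i'G [t' del'] j jQD].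
- have [t0 _ arb0] := Sset_arb_delivered (mem_S j jQD).
  exact: arb_delivered_proposed rG jF arb0.
- have [tD' [QD' [lD' sub']]] := DistS_sub_delivered i'G rG lr del'.
  by move: (DistS_unique lD lD') sub' => <-; apply; apply: mem_S.
Qed.

Lemma common_core_holds : with_guild Fs Qs F -> all_propose F lab ->
  common_core Fs Qs F x ex lab.
Proof.
move=> guild propose.
case: (classic (exists i U t, i \in GM /\ delivered (ls t i) = Some U)).
  by case=> i [U [t [iG del]]]; apply: common_core_of_delivery iG del.
move=> nodel; have [i iG] := Gmax_nonempty guild; have [Q QQ _] := Gmax_quorum iG.
exists i, Q, x; split=> // [j _ jF | i' U' i'G [t' del']].
  by have [t prop_t] := propose j jF; exists t.
by case: nodel; exists i', U', t'.
Qed.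

End Execution.

Theorem lemma3p8 (n : nat) (V : eqType) (Fs Qs : 'I_n -> {set {set 'I_n}})
    (F : {set 'I_n}) (x : 'I_n -> V)
    (ex : nat -> gstate n V) (lab : nat -> action n V) :
  asym_quorum_system Fs Qs ->
  is_exec Qs F ex lab ->
  with_guild Fs Qs F ->
  arb_spec Fs Qs F x lab ->
  reliable_links F ex lab ->
  all_propose F lab ->
  common_core Fs Qs F x ex lab /\ ag_validity Fs Qs F x ex lab /\ ag_agreement Fs Qs F ex.
Proof.
(* Reliable links only matter for termination, which is not claimed here. *)
move=> quorum_system [ex0 ex_step] guild arb _ propose.
split; [|split].
- exact: common_core_holds.
- exact: ag_validity_holds.
- exact: ag_agreement_holds ex0 ex_step arb.
Qed.
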